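(* Let $C_n=\frac{1}{n+1}\binom{2n}{n}$ ($n\ge0$) be the Catalan numbers. Then for every $n\ge0$, $$C_{n+1}=\sum_{h=0}^n\binom{n}{h}(-1)^h4^{n-h}C_{h+1};$$ that is, $L^{(-1,4)}(\sigma(C))=\sigma(C)$.
   Context: $\sigma$ is the shift operator: $\sigma((a_0,a_1,a_2,\ldots))=(a_1,a_2,\ldots)$. For $h,y$, $L^{(h,y)}(a)$ is the sequence with $n$-th term $\sum_{i=0}^n\binom{n}{i}h^iy^{n-i}a_i$. *)

From mathcomp Require Import all_boot all_order all_algebra.
Set Implicit Arguments. Unset Strict Implicit. Unset Printing Implicit Defensive.
Import GRing.Theory.
Local Open Scope ring_scope.

(* Catalan numbers C_n = binom(2n,n)/(n+1) (exact division in nat). *)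
Definition catalan (n : nat) : nat := ('C(n.*2, n) %/ n.+1)%N.

Definition shift (R : Type) (a : nat -> R) : nat -> R := fun n => a n.+1.

Definition Ltrans (R : comRingType) (h y : R) (a : nat -> R) : nat -> R :=
  fun n => \sum_(0 <= i < n.+1) ('C(n, i))%:R * h ^+ i * y ^+ (n - i) * a i.

Definition catalan_seq : nat -> int := fun n => (catalan n)%:R.

From mathcomp Require Import all_boot all_order all_algebra zify ring.

(* Let b be the shifted Catalan sequence, so b_0 = 1 and
   (i + 3) b_(i+1) = (4 i + 6) b_i.  The transform T = L^(-1,4)(b) obeys the
   same recurrence: Pascal's rule gives T_(n+1) = 4 T_n - L(σb)_n, and pushing
   the recurrence of b through L with the absorption identity
   i 'C(n, i) = n 'C(n - 1, i - 1) yields (n + 3) L(σb)_n = 6 T_n.  Since T and b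
   agree at 0, they agree everywhere. *)

Lemma catalanE n : (catalan n * n.+1 = 'C(n.*2, n))%N.
Proof.
have := mul_bin_left n.*2 n; rewrite -addnn addnK addnn => bin_rel.
have bin_dvd : 'C(n.*2, n) = ('C(n.*2, n) - 'C(n.*2, n.+1)) * n.+1 by nia.
by rewrite /catalan bin_dvd mulnK // -bin_dvd.
Qed.

Lemma central_binomS n : (n.+1 * 'C(n.*2.+2, n.+1) = 2 * n.*2.+1 * 'C(n.*2, n))%N.
Proof.
have binS_sym : 'C(n.*2.+1, n.+1) = 'C(n.*2.+1, n).
  by rewrite -bin_sub -addnn; [congr binomial; lia | lia].
have := mul_bin_diag n.*2.+2 n; have := mul_bin_diag n.*2.+1 n; rewrite /= binS_sym.
by nia.
Qed.

Lemma catalanS n : (n.+2 * catalan n.+1 = 2 * n.*2.+1 * catalan n)%N.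
Proof.
apply/eqP; rewrite -(eqn_pmul2l (ltn0Sn n)); apply/eqP.
have := central_binomS n; rewrite -catalanE -doubleS -catalanE.
by nia.
Qed.

Import GRing.Theory.
Local Open Scope ring_scope.

Section BinomialTransform.
Context {R : comNzRingType} (h y : R).

Definition idxmul (a : nat -> R) : nat -> R := fun i => i%:R * a i.

Lemma Ltrans0 (a : nat -> R) : Ltrans h y a 0 = a 0.
Proof. by rewrite /Ltrans big_nat1 bin0 !expr0 !mul1r. Qed.

Lemma Ltrans_lin (u v : R) (a b : nat -> R) n :
  Ltrans h y (fun i => u * a i + v * b i) n =
  u * Ltrans h y a n + v * Ltrans h y b n.
Proof.
rewrite /Ltrans !mulr_sumr -big_split /=.
by apply: eq_bigr => i _; ring.
Qed.

Lemma LtransS (a : nat -> R) n :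
  Ltrans h y a n.+1 = y * Ltrans h y a n + h * Ltrans h y (shift a) n.
Proof.
rewrite /Ltrans big_nat_recl //=.
under eq_bigr => i _ do rewrite binS natrD !mulrDl subSS.
rewrite big_split /= !mulr_sumr [X in _ = X + _]big_nat_recl //.
rewrite [X in _ + (X + _) = _]big_nat_recr //= (bin_small (ltnSn n)) !mul0r addr0.
rewrite !addrA; congr (_ + _ + _).
- by rewrite !bin0 !subn0 exprS; ring.
- apply: eq_big_nat => i /andP [_ hi].
  have -> : (n - i = (n - i.+1).+1)%N by lia.
  by rewrite !exprS; ring.
- by apply: eq_bigr => i _; rewrite /shift exprS; ring.
Qed.

Lemma Ltrans_idxmulS (a : nat -> R) n :
  Ltrans h y (idxmul a) n.+1 = n.+1%:R * h * Ltrans h y (shift a) n.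
Proof.
rewrite /Ltrans big_nat_recl //= /idxmul mul0r mulr0 add0r mulr_sumr.
apply: eq_bigr => i _.
have bin_absorb : 'C(n.+1, i.+1)%:R * i.+1%:R = n.+1%:R * 'C(n, i)%:R :> R.
  by rewrite -!natrM mulnC -mul_bin_diag.
rewrite /shift subSS exprS.
transitivity ('C(n.+1, i.+1)%:R * i.+1%:R * (h ^+ i * h * y ^+ (n - i) * a i.+1)).
  by ring.
by rewrite bin_absorb; ring.
Qed.

Lemma Ltrans_idxmul_shift (a : nat -> R) n :
  y * Ltrans h y (idxmul a) n + h * Ltrans h y (idxmul (shift a)) n =
  n%:R * h * Ltrans h y (shift a) n.
Proof.
have shift_idxmul : Ltrans h y (shift (idxmul a)) n =
    Ltrans h y (fun i => 1 * idxmul (shift a) i + 1 * shift a i) n.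
  by apply: eq_bigr => i _; rewrite /shift /idxmul -addn1 natrD; ring.
have := LtransS (idxmul a) n.
rewrite Ltrans_idxmulS shift_idxmul Ltrans_lin => E.
transitivity (n.+1%:R * h * Ltrans h y (shift a) n - h * Ltrans h y (shift a) n).
  by rewrite E; ring.
by rewrite -addn1 natrD; ring.
Qed.

End BinomialTransform.

Lemma Ltrans_m1_4_rec {R : comNzRingType} {b : nat -> R} :
  (forall i, (i + 3)%:R * b i.+1 = (4 * i + 6)%:R * b i) ->
  forall n, (n + 3)%:R * Ltrans (-1) 4 b n.+1 = (4 * n + 6)%:R * Ltrans (-1) 4 b n.
Proof.
move=> b_rec n.
have rec_sum : Ltrans (-1) 4 (fun i => 1 * idxmul (shift b) i + 3 * shift b i) n =
               Ltrans (-1) 4 (fun i => 4 * idxmul b i + 6 * b i) n.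
  apply: eq_bigr => i _; congr (_ * _); rewrite /idxmul /shift.
  transitivity ((i + 3)%:R * b i.+1); first by rewrite natrD; ring.
  by rewrite b_rec natrD natrM; ring.
have absorb := Ltrans_idxmul_shift (-1) 4 b n.
rewrite !Ltrans_lin in rec_sum; rewrite LtransS.
move: (Ltrans _ _ b n) (Ltrans _ _ (shift b) n) => T U in rec_sum absorb *.
move: (Ltrans _ _ (idxmul b) n) (Ltrans _ _ (idxmul (shift b)) n) => P Q in rec_sum absorb *.
have Q_eq : Q = 4 * P + n%:R * U.
  transitivity (4 * P - (4 * P + (-1) * Q)); first by ring.
  by rewrite absorb; ring.
have U_eq : (n + 3)%:R * U = 6 * T.
  transitivity (1 * Q + 3 * U - (Q - n%:R * U)); last by rewrite rec_sum Q_eq; ring.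
  by rewrite natrD; ring.
transitivity (4 * ((n + 3)%:R * T) - (n + 3)%:R * U); first by ring.
by rewrite U_eq !natrD; ring.
Qed.

Lemma shift_catalan_rec i :
  (i + 3)%:R * shift catalan_seq i.+1 = (4 * i + 6)%:R * shift catalan_seq i.
Proof.
rewrite /shift /catalan_seq -!natrM; congr _%:R.
by have := catalanS i.+1; lia.
Qed.

Theorem theorem17 :
  forall n : nat,
    Ltrans (-1 : int) 4 (shift catalan_seq) n = shift catalan_seq n.
Proof.
elim=> [|n IH]; first exact: Ltrans0.
have n3_neq0 : (n + 3)%:R != 0 :> int by rewrite Num.Theory.pnatr_eq0 addn3.
have := Ltrans_m1_4_rec shift_catalan_rec n.
by rewrite IH -shift_catalan_rec => /(mulfI n3_neq0).
Qed.
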